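(* Let $M$ be a von Neumann algebra, $\omega$ a faithful normal state on $M$, and $T:M\to M$ a positive linear map with $T(I)\le I$. Suppose there exists $\delta>0$ such that for all $k\ge0$, \[ \omega(T^k(d(T)))\in\{0\}\cup[\delta,\infty). \] Then the stabilization index satisfies $n_T\le\lfloor 1/\delta\rfloor$.
   Context: $d(T)=I-T(I)\ge0$ is the defect; $T^0=\mathrm{id}$. The stabilization index is $n_T=\min\{n\ge1:T^n(d(T))=0\}$. A state $\omega$ is faithful if $\omega(x)=0$ with $x\ge0$ implies $x=0$. *)

From mathcomp Require Import all_boot all_order all_algebra.
From mathcomp Require Import all_classical all_reals.
From mathcomp.real_closed Require Export complex.
Export GRing.Theory Num.Theory.

Set Implicit Arguments.
Unset Strict Implicit.
Unset Printing Implicit Defensive.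

Local Open Scope ring_scope.
Local Open Scope classical_set_scope.

Section Hilbert.
Variables (R : realType) (H : lmodType R[i]) (ip : H -> H -> R[i]).

Definition hnorm (x : H) : R := Num.sqrt (complex.Re (ip x x)).

Definition h_cauchy (u : nat -> H) : Prop :=
  forall e : R, 0 < e -> exists N : nat, forall m n : nat,
    (N <= m)%N -> (N <= n)%N -> hnorm (u m - u n) < e.

Definition h_converges (u : nat -> H) (x : H) : Prop :=
  forall e : R, 0 < e -> exists N : nat, forall n : nat,
    (N <= n)%N -> hnorm (u n - x) < e.

Definition is_hilbert : Prop :=
  [/\ (forall (a : R[i]) (x y z : H), ip (a *: x + y) z = a * ip x z + ip y z),
      (forall x y : H, ip y x = Num.conj (ip x y)),
      (forall x : H, 0 <= ip x x),
      (forall x : H, ip x x = 0 -> x = 0)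
    & (forall u : nat -> H, h_cauchy u -> exists x : H, h_converges u x)].

Definition op := H -> H.

Definition op0 : op := fun _ => 0.
Definition op1 : op := fun x => x.
Definition op_add (a b : op) : op := fun x => a x + b x.
Definition op_opp (a : op) : op := fun x => - a x.
Definition op_sub (a b : op) : op := fun x => a x - b x.
Definition op_scale (c : R[i]) (a : op) : op := fun x => c *: a x.
Definition op_mul (a b : op) : op := fun x => a (b x).

Definition bounded_op (a : op) : Prop :=
  (forall (c : R[i]) (x y : H), a (c *: x + y) = c *: a x + a y) /\
  exists K : R, forall x : H, hnorm (a x) <= K * hnorm x.

Definition adjoint_of (a b : op) : Prop :=
  forall x y : H, ip (a x) y = ip x (b y).

Definition self_adjoint (a : op) : Prop := adjoint_of a a.

Definition commutant (S : set op) : set op :=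
  [set a | bounded_op a /\ forall s, S s -> op_mul a s = op_mul s a].

Definition von_neumann (M : set op) : Prop :=
  [/\ (forall a, M a -> bounded_op a),
      M op1,
      (forall a b, M a -> M b -> M (op_add a b)),
      (forall c a, M a -> M (op_scale c a))
    & [/\ (forall a b, M a -> M b -> M (op_mul a b)),
          (forall a, M a -> exists2 b, M b & adjoint_of a b)
        & M = commutant (commutant M)]].

Definition op_pos (a : op) : Prop := forall x : H, 0 <= ip (a x) x.
Definition op_le (a b : op) : Prop := op_pos (op_sub b a).

Definition linear_on (M : set op) (w : op -> R[i]) : Prop :=
  forall (c : R[i]) (a b : op), M a -> M b ->
    w (op_add (op_scale c a) b) = c * w a + w b.

Definition is_state (M : set op) (w : op -> R[i]) : Prop :=
  [/\ linear_on M w,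
      (forall a, M a -> op_pos a -> 0 <= w a)
    & w op1 = 1].

Definition faithful (M : set op) (w : op -> R[i]) : Prop :=
  forall a, M a -> op_pos a -> w a = 0 -> a = op0.

(* normal: w (sup_alpha x_alpha) = sup_alpha w(x_alpha) for every bounded
   increasing net of positive elements, i.e. for every upward directed
   nonempty family D of positive elements of M with least upper bound x
   (in the self-adjoint part of M). *)
Definition normal (M : set op) (w : op -> R[i]) : Prop :=
  forall (D : set op) (x : op),
    D `<=` M -> (exists d, D d) -> (forall d, D d -> op_pos d) ->
    (forall a b, D a -> D b -> exists2 c, D c & op_le a c /\ op_le b c) ->
    M x -> (forall d, D d -> op_le d x) ->
    (forall y, M y -> self_adjoint y -> (forall d, D d -> op_le d y) -> op_le x y) ->
    complex.Re (w x) = sup [set complex.Re (w d) | d in D].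

Definition linear_map_on (M : set op) (T : op -> op) : Prop :=
  (forall a, M a -> M (T a)) /\
  forall (c : R[i]) (a b : op), M a -> M b ->
    T (op_add (op_scale c a) b) = op_add (op_scale c (T a)) (T b).

Definition positive_map_on (M : set op) (T : op -> op) : Prop :=
  forall a, M a -> op_pos a -> op_pos (T a).

Definition defect (T : op -> op) : op := op_sub op1 (T op1).

Definition stab_index (T : op -> op) (n : nat) : Prop :=
  [/\ (1 <= n)%N,
      iter n T (defect T) = op0
    & forall m : nat, (1 <= m)%N -> iter m T (defect T) = op0 -> (n <= m)%N].

End Hilbert.

(** The defects telescope: [d(T) = I - T(I)] gives
    [sum_(k < n) w(T^k d) = 1 - w(T^n I) <= 1].  By faithfulness every
    nonzero [T^k d] contributes at least [delta] to this sum, so at most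
    [1/delta] of the iterates [T^k d] are nonzero.  Since [T 0 = 0], the
    iterates vanish from the first index [m0] at which one of them does,
    [n_T = max(1, m0)], and both [1] and [m0] are at most [1/delta]. *)
From mathcomp Require Import all_boot all_order all_algebra.
From mathcomp Require Import all_classical all_reals.
From mathcomp.real_closed Require Import complex.
Import Order.TTheory GRing.Theory Num.Theory.

Set Implicit Arguments.
Unset Strict Implicit.
Unset Printing Implicit Defensive.

Local Open Scope ring_scope.
Local Open Scope classical_set_scope.
Local Open Scope complex_scope.

Section StabilizationIndex.
Variables (R : realType) (H : lmodType R[i]) (ip : H -> H -> R[i]).
Variables (M : set (op H)) (w : op H -> R[i]) (T : op H -> op H).

Local Notation op0 := (@op0 _ H).
Local Notation op1 := (@op1 _ H).
Local Notation d := (defect T).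

Lemma stab_index_maxn (m : nat) :
    T op0 = op0 -> iter m T d = op0 ->
    (forall k, iter k T d = op0 -> (m <= k)%N) ->
  stab_index T (maxn 1 m)%N.
Proof.
move=> T0 dm0 m_min; split; first by rewrite leq_maxl.
- move: dm0 {m_min}; case: m => [|m] /= dm0; first by rewrite dm0 T0.
  by rewrite (maxn_idPr _).
- by move=> k k_ge1 dk0; rewrite geq_max k_ge1 m_min.
Qed.

Hypothesis TM : linear_map_on M T.

Lemma map_on_iter k a : M a -> M (iter k T a).
Proof. by elim: k => [//|k IH] Ma /=; apply: TM.1; apply: IH. Qed.

Lemma linear_iter k c a b : M a -> M b ->
  iter k T (op_add (op_scale c a) b) = op_add (op_scale c (iter k T a)) (iter k T b).
Proof.
elim: k => [//|k IH] Ma Mb /=.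
by rewrite IH // TM.2 //; apply: map_on_iter.
Qed.

Hypotheses (M1 : M op1) (Madd : forall a b, M a -> M b -> M (op_add a b))
  (Mscale : forall c a, M a -> M (op_scale c a)).

Lemma M_op0 : M op0.
Proof.
have -> : op0 = op_scale 0 op1 by apply/funext => x; rewrite /op_scale scale0r.
exact: Mscale.
Qed.

Lemma linear_map_op0 : T op0 = op0.
Proof.
have op0E : op0 = op_add (op_scale (-1) op0) op0.
  by apply/funext => x; rewrite /op_add /op_scale /op0 scaler0 addr0.
rewrite {1}op0E TM.2; [apply/funext => x | exact: M_op0..].
by rewrite /op_add /op_scale scaleN1r addNr.
Qed.

Lemma defectE : d = op_add (op_scale (-1) (T op1)) op1.
Proof.
by apply/funext => x; rewrite /defect /op_sub /op_add /op_scale scaleN1r addrC.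
Qed.

Lemma M_defect : M d.
Proof. by rewrite defectE; apply/Madd/M1/Mscale/TM.1. Qed.

Lemma positive_iter k a :
  positive_map_on ip M T -> M a -> op_pos ip a -> op_pos ip (iter k T a).
Proof.
move=> Tpos Ma a_pos; elim: k => [//|k IH] /=.
by apply: Tpos => //; apply: map_on_iter.
Qed.

Hypothesis w_state : is_state ip M w.

Lemma sum_state_iter_defect n :
  \sum_(k < n) w (iter k T d) = 1 - w (iter n T op1).
Proof.
have [w_lin _ w1] := w_state.
rewrite -(big_mkord xpredT (fun k => w (iter k T d))).
rewrite (@telescope_sumr_eq _ 0 n (fun k => - w (iter k T op1))) //=.
  by rewrite w1 opprK addrC.
have MT1 := TM.1 _ M1.
move=> k _; rewrite defectE linear_iter // w_lin; try exact: map_on_iter.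
by rewrite mulN1r opprK -iterSr.
Qed.

Lemma sum_state_iter_defect_le1 n :
  is_hilbert ip -> positive_map_on ip M T -> \sum_(k < n) w (iter k T d) <= 1.
Proof.
move=> [_ _ ip_ge0 _ _] Tpos; rewrite sum_state_iter_defect lerBlDr lerDl.
have [_ w_ge0 _] := w_state.
apply: w_ge0; first exact: map_on_iter.
by apply: positive_iter => // x; apply: ip_ge0.
Qed.

Lemma nonzero_iter_defect_bound (delta : R) n :
    is_hilbert ip -> positive_map_on ip M T -> faithful ip M w ->
    op_le ip (T op1) op1 ->
    (forall k, w (iter k T d) = 0 \/ delta%:C <= w (iter k T d)) ->
    (forall k, (k < n)%N -> iter k T d <> op0) ->
  n%:R * delta <= 1.
Proof.
move=> hilb Tpos w_faith T1_le gap nonzero.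
have Md k : M (iter k T d) := map_on_iter k M_defect.
have : \sum_(k < n) delta%:C <= \sum_(k < n) w (iter k T d).
  apply: ler_sum => k _; case: (gap k) => // wk0.
  case: (nonzero k (ltn_ord k)).
  apply: w_faith => //; apply: positive_iter => //; exact: M_defect.
move=> /le_trans /(_ (sum_state_iter_defect_le1 n hilb Tpos)).
rewrite sumr_const card_ord => sum_le1.
by rewrite -lecR rmorphM rmorph_nat mulr_natl rmorph1.
Qed.

End StabilizationIndex.

Lemma le_floor_inv (R : archiRealFieldType) (delta : R) (n : nat) :
  0 < delta -> n%:R * delta <= 1 -> (n%:Z <= Num.floor (delta^-1))%R.
Proof.
move=> delta_gt0 n_delta_le1.
by rewrite floor_ge_int -(ler_pM2r delta_gt0) mulVf ?lt0r_neq0.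
Qed.

Theorem proposition7p23 (R : realType) (H : lmodType R[i]) (ip : H -> H -> R[i])
  (M : set (op H)) (w : op H -> R[i]) (T : op H -> op H) (delta : R) :
  is_hilbert ip ->
  von_neumann ip M ->
  is_state ip M w -> faithful ip M w -> normal ip M w ->
  linear_map_on M T -> positive_map_on ip M T ->
  op_le ip (T (@op1 _ H)) (@op1 _ H) ->
  0 < delta ->
  delta <= 1 ->
  (forall k : nat,
      w (iter k T (defect T)) = 0 \/ real_complex R delta <= w (iter k T (defect T))) ->
  exists n : nat, stab_index T n /\ (n%:Z <= Num.floor (delta^-1))%R.
Proof.
move=> hilb [_ M1 Madd Mscale _] w_state w_faith _ TM Tpos T1_le delta_gt0 delta_le1
  gap.
have bound n := nonzero_iter_defect_bound (n := n) TM M1 Madd Mscale w_state hilb Tpos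
  w_faith T1_le gap.
have zeroP : exists k, `[< iter k T (defect T) = @op0 _ H >].
  apply: contrapT => no_zero.
  have := truncnS_gt delta^-1; rewrite -(ltr_pM2r delta_gt0) mulVf ?lt0r_neq0 //.
  by rewrite ltNge bound // => k _ dk0; apply: no_zero; exists k; apply/asboolP.
have [m /asboolP dm0 m_min] := ex_minnP zeroP.
exists (maxn 1 m)%N; split.
  apply: stab_index_maxn (linear_map_op0 TM M1 Mscale) dm0 _.
  by move=> k /asboolP; apply: m_min.
apply: le_floor_inv => //.
have [_ | _] := leqP m 1%N; first by rewrite mul1r.
apply: bound => k k_lt_m dk0.
by have := m_min k (asboolT dk0); rewrite leqNgt k_lt_m.
Qed.
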